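(* Suppose that for each sequence $R\in\mathbb{R}^{\mathbb{N}}$, $\mathcal{Y}_R$ is a family of metric spaces with uniform property A. If $\mathcal{X}$ is a family of metric spaces such that $\mathcal{X}$ is uniformly $R$-decomposable over $\mathcal{Y}_R$ for every $R\in\mathbb{R}^{\mathbb{N}}$, then $\mathcal{X}$ has uniform property A.
   Context: A family $\mathcal{U}$ of metric subspaces of a metric space $(X,d)$ is $r$-disjoint if $d(x,y)>r$ whenever $x\in U$, $y\in U'$ and $U\neq U'$ are elements of $\mathcal{U}$. For families $\mathcal{X},\mathcal{Y}$ of metric spaces and $R=(R_1,R_2,\dots)\in\mathbb{R}^{\mathbb{N}}$, $\mathcal{X}$ is uniformly $R$-decomposable over $\mathcal{Y}$ if there is an integer $k$ such that for each $X\in\mathcal{X}$ there exist subcollections $\mathcal{U}_1,\dots,\mathcal{U}_k\subseteq\mathcal{Y}$, consisting of subspaces of $X$ with the induced metric, such that each $\mathcal{U}_i$ is $R_i$-disjoint and $\bigcup_i\mathcal{U}_i$ covers $X$. For a metric space $X$, $\ell^1(X)$ is the $\ell^1$-space of the underlying set and $\xi_x$ denotes the value of a map $\xi\colon X\to\ell^1(X)$ at $x$. Such a map has $\varepsilon$-variation if for each $k\in\mathbb{N}$ and $x_1,x_2\in X$ with $d(x_1,x_2)\le k$ one has $\|\xi_{x_1}-\xi_{x_2}\|_1\le k\varepsilon$. A family $\mathcal{X}$ has uniform property A if for each $\varepsilon>0$ there is $S>0$ such that for each $X\in\mathcal{X}$ there is $\xi\colon X\to\ell^1(X)$ with $\|\xi_x\|_1=1$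 for all $x$, $\xi$ has $\varepsilon$-variation, and $\operatorname{supp}\xi_x\subset\bar B(x,S)$ for all $x\in X$. (The paper introduces uniform property A for families of discrete metric spaces with bounded geometry.) *)

From Stdlib Require Import Reals List.
Open Scope R_scope.

Record MetricSpace := {
  carrier :> Type;
  dist : carrier -> carrier -> R;
  dist_refl : forall x, dist x x = 0;
  dist_eq : forall x y, dist x y = 0 -> x = y;
  dist_sym : forall x y, dist x y = dist y x;
  dist_tri : forall x y z, dist x z <= dist x y + dist y z
}.

Arguments dist {m} _ _.

Definition mfamily := MetricSpace -> Prop.

Definition subspace (X : MetricSpace) (U : X -> Prop) : MetricSpace.
Proof.
  refine {| carrier := {x : X | U x};
            dist := fun a b => dist (proj1_sig a) (proj1_sig b) |}.
  - intros [x hx]; apply dist_refl.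
  - intros [x hx] [y hy] h; simpl in h.
    pose proof (dist_eq X x y h) as e; subst y.
    f_equal; apply Classical_Prop.proof_irrelevance.
  - intros [x hx] [y hy]; apply dist_sym.
  - intros [x hx] [y hy] [z hz]; apply dist_tri.
Defined.

Definition r_disjoint (X : MetricSpace) (r : R) (UU : (X -> Prop) -> Prop) : Prop :=
  forall U U' : X -> Prop, UU U -> UU U' -> U <> U' ->
    forall x y : X, U x -> U' y -> dist x y > r.

(* Uniform R-decomposability of XX over YY, for R = (R_1, R_2, ...);
   R_i is represented as Rs (i-1), i.e. the collections are indexed by
   i = 0, ..., k-1 and the i-th one is (Rs i)-disjoint. *)
Definition uniformly_decomposable (Rs : nat -> R) (XX YY : mfamily) : Prop :=
  exists k : nat, forall X : MetricSpace, XX X ->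
    exists UU : nat -> (X -> Prop) -> Prop,
      (forall i, (i < k)%nat -> forall U, UU i U -> YY (subspace X U)) /\
      (forall i, (i < k)%nat -> r_disjoint X (Rs i) (UU i)) /\
      (forall x : X, exists i U, (i < k)%nat /\ UU i U /\ U x).

(* l^1(X): the l^1 norm of f : X -> R is the supremum of the finite sums
   sum_{y in F} |f y| over finite subsets F of X (duplicate-free lists). *)
Definition fin_abs_sum {X : Type} (f : X -> R) (l : list X) : R :=
  fold_right (fun y s => Rabs (f y) + s) 0 l.

Definition l1_norm_is {X : Type} (f : X -> R) (c : R) : Prop :=
  is_lub (fun s => exists l : list X, NoDup l /\ s = fin_abs_sum f l) c.

Definition l1_norm_le {X : Type} (f : X -> R) (c : R) : Prop :=
  forall l : list X, NoDup l -> fin_abs_sum f l <= c.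

Definition has_variation (X : MetricSpace) (xi : X -> X -> R) (eps : R) : Prop :=
  forall (k : nat) (x1 x2 : X), dist x1 x2 <= INR k ->
    l1_norm_le (fun y => xi x1 y - xi x2 y) (INR k * eps).

Definition uniform_property_A (XX : mfamily) : Prop :=
  forall eps : R, eps > 0 -> exists S : R, S > 0 /\
    forall X : MetricSpace, XX X ->
      exists xi : X -> X -> R,
        (forall x, l1_norm_is (xi x) 1) /\
        has_variation X xi eps /\
        (forall x y, xi x y <> 0 -> dist x y <= S).

(* Fix eps and an integer N > 4/eps.  Level i of a decomposition works at scale
   L_i = N 2^(i+1), so that sum_i 1/L_i <= 1/N however many levels there are.
   On the union A_i of the i-th family, the property-A maps of the members glue
   to a map zeta_i, because points of A_i that are close lie in the same member.
   Normalising 1/L_i-Lipschitz bumps around the A_i gives a partition of unity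
   (phi_i) whose total variation between x and x' is at most
   2 d(x,x') sum_i 1/L_i <= d(x,x') eps/2, and
   xi_x = sum_i phi_i(x) zeta_i(p_i x), with p_i x a point of A_i near x, is the
   required map: the zeta_i contribute the other eps/2 of the variation. *)

From Pilot Require Import Defs.
From Stdlib Require Import Reals Lra Lia List FinFun Classical ClassicalEpsilon.
Open Scope R_scope.
Import ListNotations.

Local Notation dist := Defs.dist.
Local Notation dist_refl := Defs.dist_refl.
Local Notation dist_sym := Defs.dist_sym.
Local Notation dist_tri := Defs.dist_tri.
Local Notation dist_eq := Defs.dist_eq.

Fixpoint rsum (k : nat) (f : nat -> R) : R :=
  match k with O => 0 | S n => rsum n f + f n end.

Lemma rsum_ext k f g : (forall i, (i < k)%nat -> f i = g i) -> rsum k f = rsum k g.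
Proof.
  induction k as [|n IH]; intros H; simpl; auto.
  rewrite IH, H by (auto || intros; apply H; lia); reflexivity.
Qed.

Lemma rsum_le k f g : (forall i, (i < k)%nat -> f i <= g i) -> rsum k f <= rsum k g.
Proof.
  induction k as [|n IH]; intros H; simpl; [lra|].
  pose proof (H n (Nat.lt_succ_diag_r n)).
  enough (rsum n f <= rsum n g) by lra.
  apply IH; intros; apply H; lia.
Qed.

Lemma rsum_plus k f g : rsum k (fun i => f i + g i) = rsum k f + rsum k g.
Proof. induction k; simpl; [|rewrite IHk]; lra. Qed.

Lemma rsum_minus k f g : rsum k (fun i => f i - g i) = rsum k f - rsum k g.
Proof. induction k; simpl; [|rewrite IHk]; lra. Qed.

Lemma rsum_scal k c f : rsum k (fun i => c * f i) = c * rsum k f.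
Proof. induction k; simpl; [|rewrite IHk]; lra. Qed.

Lemma rsum_0 k : rsum k (fun _ => 0) = 0.
Proof. induction k; simpl; [|rewrite IHk]; lra. Qed.

Lemma rsum_nonneg k f : (forall i, (i < k)%nat -> 0 <= f i) -> 0 <= rsum k f.
Proof. intros H. rewrite <- (rsum_0 k). apply rsum_le; auto. Qed.

Lemma Rabs_rsum_le k f : Rabs (rsum k f) <= rsum k (fun i => Rabs (f i)).
Proof.
  induction k; simpl; [rewrite Rabs_R0; lra|].
  pose proof (Rabs_triang (rsum k f) (f k)); lra.
Qed.

Lemma rsum_term_le k f j :
  (forall i, (i < k)%nat -> 0 <= f i) -> (j < k)%nat -> f j <= rsum k f.
Proof.
  induction k as [|n IH]; intros H Hj; simpl; [lia|].
  destruct (Nat.eq_dec j n) as [->|Hjn].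
  - enough (0 <= rsum n f) by lra. apply rsum_nonneg; intros; apply H; lia.
  - enough (f j <= rsum n f) by (pose proof (H n (Nat.lt_succ_diag_r n)); lra).
    apply IH; [intros; apply H|]; lia.
Qed.

Lemma rsum_neq0 k f : rsum k f <> 0 -> exists i, (i < k)%nat /\ f i <> 0.
Proof.
  induction k as [|n IH]; simpl; intros H; [lra|].
  destruct (Req_dec (f n) 0) as [Hn|Hn].
  - destruct IH as [i [Hi Hf]]; [lra|]. exists i; split; [lia|auto].
  - exists n; split; [lia|auto].
Qed.

Section L1Norm.
Context {T : Type}.
Implicit Types (f g h : T -> R) (l : list T).

Lemma fin_abs_sum_ext f g l :
  (forall y, Rabs (f y) = Rabs (g y)) -> fin_abs_sum f l = fin_abs_sum g l.
Proof. intros H; induction l; simpl; [|rewrite H, IHl]; lra. Qed.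

Lemma fin_abs_sum_app f l1 l2 :
  fin_abs_sum f (l1 ++ l2) = fin_abs_sum f l1 + fin_abs_sum f l2.
Proof. induction l1; simpl; [|rewrite IHl1]; lra. Qed.

Lemma fin_abs_sum_incl f l1 l2 :
  NoDup l1 -> incl l1 l2 -> fin_abs_sum f l1 <= fin_abs_sum f l2.
Proof.
  revert l1; induction l2 as [|b l2 IH]; intros l1 Hl1 Hincl.
  - destruct l1 as [|a l1]; [simpl; lra|].
    destruct (Hincl a (in_eq a l1)).
  - simpl. pose proof (Rabs_pos (f b)).
    destruct (classic (In b l1)) as [Hb|Hb].
    + destruct (in_split _ _ Hb) as [la [lb ->]].
      assert (fin_abs_sum f (la ++ lb) <= fin_abs_sum f l2).
      { apply IH; [eapply NoDup_remove_1; eauto|].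
        intros x Hx.
        assert (Hxb : x <> b) by (intros ->; exact (NoDup_remove_2 _ _ _ Hl1 Hx)).
        destruct (Hincl x) as [E|]; auto; [|congruence].
        apply in_app_or in Hx; apply in_or_app; simpl; tauto. }
      rewrite fin_abs_sum_app in *; simpl; lra.
    + enough (fin_abs_sum f l1 <= fin_abs_sum f l2) by lra.
      apply IH; auto. intros x Hx.
      destruct (Hincl x Hx) as [->|]; tauto.
Qed.

Lemma exists_NoDup_incl l : exists l', NoDup l' /\ incl l l'.
Proof.
  induction l as [|a l [l' [Hl' Hincl]]].
  - exists []. split; [constructor|apply incl_nil_l].
  - destruct (classic (In a l')).
    + exists l'. split; auto. now apply incl_cons.
    + exists (a :: l'). split; [now constructor|]. apply incl_cons; [now left|now apply incl_tl].
Qed.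

Lemma l1_norm_le_ext f g c :
  (forall y, f y = g y) -> l1_norm_le f c -> l1_norm_le g c.
Proof.
  intros H Hf l Hl. rewrite <- (fin_abs_sum_ext f g l); auto.
  intros; now rewrite H.
Qed.

Lemma l1_norm_le_weaken f a b : a <= b -> l1_norm_le f a -> l1_norm_le f b.
Proof. intros H Hf l Hl. specialize (Hf l Hl). lra. Qed.

Lemma l1_norm_le_0 f : (forall y, f y = 0) -> l1_norm_le f 0.
Proof.
  intros H l _. induction l; simpl; [lra|]. rewrite H, Rabs_R0. lra.
Qed.

Lemma l1_norm_le_plus f g a b : l1_norm_le f a -> l1_norm_le g b ->
  l1_norm_le (fun y => f y + g y) (a + b).
Proof.
  intros Hf Hg l Hl. specialize (Hf l Hl); specialize (Hg l Hl).
  enough (fin_abs_sum (fun y => f y + g y) l <= fin_abs_sum f l + fin_abs_sum g l) by lra.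
  clear; induction l; simpl; [lra|]. pose proof (Rabs_triang (f a) (g a)); lra.
Qed.

Lemma l1_norm_le_minus f g a b : l1_norm_le f a -> l1_norm_le g b ->
  l1_norm_le (fun y => f y - g y) (a + b).
Proof.
  intros Hf Hg. apply (l1_norm_le_plus f (fun y => - g y)); auto.
  intros l Hl. rewrite (fin_abs_sum_ext _ g l) by (intros; apply Rabs_Ropp). auto.
Qed.

Lemma l1_norm_le_scal f c a : (c <> 0 -> l1_norm_le f a) ->
  l1_norm_le (fun y => c * f y) (Rabs c * a).
Proof.
  intros Hf l Hl. destruct (Req_dec c 0) as [->|Hc].
  - rewrite Rabs_R0, Rmult_0_l. apply l1_norm_le_0; auto. intros; ring.
  - specialize (Hf Hc l Hl).
    replace (fin_abs_sum (fun y => c * f y) l) with (Rabs c * fin_abs_sum f l).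
    + apply Rmult_le_compat_l; [apply Rabs_pos|auto].
    + clear; induction l; simpl; [|rewrite Rabs_mult, <- IHl]; ring.
Qed.

Lemma l1_norm_le_rsum k (F : nat -> T -> R) (B : nat -> R) :
  (forall i, (i < k)%nat -> l1_norm_le (F i) (B i)) ->
  l1_norm_le (fun y => rsum k (fun i => F i y)) (rsum k B).
Proof.
  induction k as [|n IH]; intros H; simpl.
  - now apply l1_norm_le_0.
  - apply l1_norm_le_plus; [apply IH; intros|]; apply H; lia.
Qed.

Lemma l1_norm_is_le f c : l1_norm_is f c -> l1_norm_le f c.
Proof. intros [Hub _] l Hl. apply Hub. eauto. Qed.

Lemma l1_norm_is_abs f c :
  l1_norm_is f c -> l1_norm_is (fun y => Rabs (f y)) c.
Proof.
  assert (E : forall l, fin_abs_sum (fun y => Rabs (f y)) l = fin_abs_sum f l)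
    by (intros l; apply fin_abs_sum_ext; intros; apply Rabs_Rabsolu).
  intros [Hub Hlub]. split.
  - intros s [l [Hl ->]]. rewrite E. apply Hub. eauto.
  - intros b Hb. apply Hlub. intros s [l [Hl ->]]. rewrite <- E. apply Hb. eauto.
Qed.

Lemma l1_norm_le_abs_minus f g c : l1_norm_le (fun y => f y - g y) c ->
  l1_norm_le (fun y => Rabs (f y) - Rabs (g y)) c.
Proof.
  intros H l Hl. eapply Rle_trans; [|apply (H l Hl)]. clear.
  induction l; simpl; [lra|]. pose proof (Rabs_triang_inv2 (f a) (g a)); lra.
Qed.

End L1Norm.

Section ConvexCombination.
Context {T : Type} (k : nat) (c : nat -> R).
Hypothesis c_nonneg : forall i, (i < k)%nat -> 0 <= c i.
Hypothesis c_sum : rsum k c = 1.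

Lemma fin_abs_sum_rsum (g : nat -> T -> R) l :
  (forall i y, (i < k)%nat -> 0 <= g i y) ->
  fin_abs_sum (fun y => rsum k (fun i => c i * g i y)) l =
  rsum k (fun i => c i * fin_abs_sum (g i) l).
Proof.
  intros g_nonneg. induction l as [|a l IH]; simpl.
  - rewrite <- (rsum_0 k) at 1. apply rsum_ext. intros; ring.
  - rewrite IH, Rabs_pos_eq, <- rsum_plus.
    + apply rsum_ext. intros i Hi. rewrite (Rabs_pos_eq (g i a)) by auto. ring.
    + apply rsum_nonneg. intros i Hi. apply Rmult_le_pos; auto.
Qed.

Lemma common_NoDup_list (P : nat -> list T -> Prop) :
  (forall i, (i < k)%nat -> exists l, NoDup l /\ P i l) ->
  exists L, NoDup L /\ forall i, (i < k)%nat -> exists l, NoDup l /\ P i l /\ incl l L.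
Proof.
  clear c_nonneg c_sum. induction k as [|n IH]; intros H.
  - exists []. split; [constructor|lia].
  - destruct IH as [L [_ HL]]; [intros; apply H; lia|].
    destruct (H n (Nat.lt_succ_diag_r n)) as [ln [Hln Pn]].
    destruct (exists_NoDup_incl (L ++ ln)) as [L' [HL' Hincl]].
    exists L'. split; auto. intros i Hi.
    destruct (Nat.eq_dec i n) as [->|Hin].
    + exists ln. repeat split; auto. eapply incl_tran; [apply incl_appr, incl_refl|eauto].
    + destruct (HL i ltac:(lia)) as [l [Hl [Pl Il]]]. exists l. repeat split; auto.
      eapply incl_tran; [eapply incl_appl, Il|eauto].
Qed.

Lemma l1_norm_is_convex_comb (g : nat -> T -> R) :
  (forall i y, (i < k)%nat -> 0 <= g i y) ->
  (forall i, (i < k)%nat -> 0 < c i -> l1_norm_is (g i) 1) ->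
  l1_norm_is (fun y => rsum k (fun i => c i * g i y)) 1.
Proof.
  intros g_nonneg g_unit. split.
  - intros s [l [Hl ->]]. rewrite fin_abs_sum_rsum, <- c_sum by auto.
    apply rsum_le. intros i Hi. rewrite <- (Rmult_1_r (c i)) at 2.
    destruct (c_nonneg i Hi) as [Hc|<-]; [|lra].
    apply Rmult_le_compat_l; [lra|]. apply l1_norm_is_le; auto.
  - intros b Hb. apply Rnot_lt_le. intros Hb1.
    set (t := (1 + b) / 2).
    assert (Hlists : forall i, (i < k)%nat ->
              exists l, NoDup l /\ (0 < c i -> t < fin_abs_sum (g i) l)).
    { intros i Hi. destruct (Rlt_dec 0 (c i)) as [Hc|Hc].
      - destruct (g_unit i Hi Hc) as [_ Hlub].
        apply NNPP. intros Hno. enough (1 <= t) by (unfold t in *; lra).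
        apply Hlub. intros s [l [Hl ->]]. apply Rnot_lt_le. intros Hs.
        apply Hno. exists l. auto.
      - exists []. split; [constructor|lra]. }
    destruct (common_NoDup_list _ Hlists) as [L [HL HLs]].
    assert (HbL : fin_abs_sum (fun y => rsum k (fun i => c i * g i y)) L <= b)
      by (apply Hb; eauto).
    rewrite fin_abs_sum_rsum in HbL by auto.
    enough (t * rsum k c <= rsum k (fun i => c i * fin_abs_sum (g i) L))
      by (rewrite c_sum in *; unfold t in *; lra).
    rewrite <- rsum_scal. apply rsum_le. intros i Hi.
    destruct (HLs i Hi) as [l [Hl [Pl Il]]].
    pose proof (c_nonneg i Hi).
    destruct (Rlt_dec 0 (c i)) as [Hc|Hc].
    + pose proof (fin_abs_sum_incl (g i) l L Hl Il). specialize (Pl Hc). nra.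
    + replace (c i) with 0 by lra. lra.
Qed.

Lemma l1_norm_le_comb_minus (a : nat -> R) (f g : nat -> T -> R) (B : R) :
  (forall i, (i < k)%nat -> a i <> c i -> l1_norm_le (f i) 1) ->
  (forall i, (i < k)%nat -> c i <> 0 -> l1_norm_le (fun y => f i y - g i y) B) ->
  l1_norm_le (fun y => rsum k (fun i => a i * f i y) - rsum k (fun i => c i * g i y))
             (rsum k (fun i => Rabs (a i - c i)) + B).
Proof.
  intros f_le fg_le.
  apply (l1_norm_le_ext (fun y => rsum k (fun i => (a i - c i) * f i y) +
                                  rsum k (fun i => c i * (f i y - g i y)))).
  { intros y. rewrite <- rsum_plus, <- rsum_minus. apply rsum_ext. intros; ring. }
  apply l1_norm_le_plus.
  - rewrite <- (rsum_ext k (fun i => Rabs (a i - c i) * 1) (fun i => Rabs (a i - c i)))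
      by (intros; ring).
    apply l1_norm_le_rsum. intros i Hi. apply l1_norm_le_scal.
    intros Hac. apply f_le; auto. lra.
  - replace B with (rsum k (fun i => Rabs (c i) * B)).
    + apply l1_norm_le_rsum. intros i Hi. apply l1_norm_le_scal. auto.
    + rewrite (rsum_ext k _ (fun i => B * c i)), rsum_scal, c_sum; [ring|].
      intros i Hi. rewrite Rabs_pos_eq by auto. ring.
Qed.

End ConvexCombination.

Lemma dist_nonneg (X : MetricSpace) (x y : X) : 0 <= dist x y.
Proof.
  pose proof (dist_tri X x y x) as H.
  rewrite dist_refl, (dist_sym X y x) in H. lra.
Qed.

Section ExtensionByZero.
Context {X : MetricSpace} (U : X -> Prop).

Definition ext0 (h : subspace X U -> R) (y : X) : R :=
  match excluded_middle_informative (U y) with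
  | left hy => h (exist _ y hy)
  | right _ => 0
  end.

Lemma ext0_val h (b : subspace X U) : ext0 h (proj1_sig b) = h b.
Proof.
  destruct b as [y hy]. unfold ext0; simpl.
  destruct (excluded_middle_informative (U y)) as [hy'|]; [|contradiction].
  now rewrite (proof_irrelevance _ hy' hy).
Qed.

Fixpoint restrict (l : list X) : list (subspace X U) :=
  match l with
  | [] => []
  | y :: l' =>
      match excluded_middle_informative (U y) with
      | left hy => (exist _ y hy : subspace X U) :: restrict l'
      | right _ => restrict l'
      end
  end.

Lemma in_restrict l (b : subspace X U) : In b (restrict l) -> In (proj1_sig b) l.
Proof.
  induction l as [|y l IH]; simpl; auto.
  destruct (excluded_middle_informative (U y)); simpl; intros [<-|H] || intros H; auto.
Qed.

Lemma NoDup_restrict l : NoDup l -> NoDup (restrict l).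
Proof.
  induction l as [|y l IH]; simpl; intros H; [constructor|].
  inversion H; subst.
  destruct (excluded_middle_informative (U y)); auto.
  constructor; auto. intros Hin. now apply in_restrict in Hin.
Qed.

Lemma NoDup_map_proj1_sig (l : list (subspace X U)) :
  NoDup l -> NoDup (map (@proj1_sig X U) l).
Proof.
  intros H. apply Injective_map_NoDup; auto.
  intros [y hy] [z hz]; simpl; intros ->. f_equal; apply proof_irrelevance.
Qed.

Lemma fin_abs_sum_ext0 h l : fin_abs_sum (ext0 h) l = fin_abs_sum h (restrict l).
Proof.
  induction l as [|y l IH]; simpl; auto.
  unfold ext0 at 1. destruct (excluded_middle_informative (U y)); simpl;
  rewrite ?Rabs_R0, IH; [reflexivity|apply Rplus_0_l].
Qed.

Lemma fin_abs_sum_ext0_map h (l : list (subspace X U)) :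
  fin_abs_sum (ext0 h) (map (@proj1_sig X U) l) = fin_abs_sum h l.
Proof. induction l; simpl; auto. now rewrite IHl, ext0_val. Qed.

Lemma l1_norm_le_ext0 h c : l1_norm_le h c -> l1_norm_le (ext0 h) c.
Proof.
  intros H l Hl. rewrite fin_abs_sum_ext0. apply H. now apply NoDup_restrict.
Qed.

Lemma l1_norm_is_ext0 h c : l1_norm_is h c -> l1_norm_is (ext0 h) c.
Proof.
  intros [Hub Hlub]. split.
  - intros s [l [Hl ->]]. rewrite fin_abs_sum_ext0. apply Hub.
    exists (restrict l). split; auto. now apply NoDup_restrict.
  - intros b Hb. apply Hlub. intros s [l [Hl ->]]. rewrite <- fin_abs_sum_ext0_map.
    apply Hb. exists (map (@proj1_sig X U) l). split; auto. now apply NoDup_map_proj1_sig.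
Qed.

Definition lift (h : subspace X U -> subspace X U -> R) (x : X) : X -> R :=
  match excluded_middle_informative (U x) with
  | left hx => ext0 (h (exist _ x hx))
  | right _ => fun _ => 0
  end.

Lemma lift_val h (a : subspace X U) : lift h (proj1_sig a) = ext0 (h a).
Proof.
  destruct a as [x hx]. unfold lift; simpl.
  destruct (excluded_middle_informative (U x)) as [hx'|]; [|contradiction].
  now rewrite (proof_irrelevance _ hx' hx).
Qed.

Lemma lift_nonneg h x y : (forall a b, 0 <= h a b) -> 0 <= lift h x y.
Proof.
  intros H. unfold lift, ext0.
  destruct (excluded_middle_informative (U x)); [|lra].
  destruct (excluded_middle_informative (U y)); [auto|lra].
Qed.

Lemma lift_neq0 h x y : lift h x y <> 0 ->
  exists a b, proj1_sig a = x /\ proj1_sig b = y /\ h a b <> 0.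
Proof.
  unfold lift, ext0.
  destruct (excluded_middle_informative (U x)) as [hx|]; [|lra].
  destruct (excluded_middle_informative (U y)) as [hy|]; [|lra].
  intros H. exists (exist _ x hx), (exist _ y hy). auto.
Qed.

Lemma l1_norm_is_lift h (a : subspace X U) c :
  l1_norm_is (h a) c -> l1_norm_is (lift h (proj1_sig a)) c.
Proof. rewrite lift_val. apply l1_norm_is_ext0. Qed.

Lemma l1_norm_le_lift_minus h (a1 a2 : subspace X U) c :
  l1_norm_le (fun b => h a1 b - h a2 b) c ->
  l1_norm_le (fun y => lift h (proj1_sig a1) y - lift h (proj1_sig a2) y) c.
Proof.
  rewrite !lift_val. intros H.
  apply (l1_norm_le_ext (ext0 (fun b => h a1 b - h a2 b))).
  - intros y. unfold ext0. destruct (excluded_middle_informative (U y)); lra.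
  - now apply l1_norm_le_ext0.
Qed.

End ExtensionByZero.

Definition A_map (X : MetricSpace) (eps S : R) (xi : X -> X -> R) : Prop :=
  (forall x, l1_norm_is (xi x) 1) /\ has_variation X xi eps /\
  (forall x y, xi x y <> 0 -> dist x y <= S).

Record partial_A_map (X : MetricSpace) (A : X -> Prop) (r eps S : R)
    (zeta : X -> X -> R) : Prop := {
  partial_A_map_nonneg : forall x y, 0 <= zeta x y;
  partial_A_map_unit : forall x, A x -> l1_norm_is (zeta x) 1;
  partial_A_map_support : forall x y, A x -> zeta x y <> 0 -> dist x y <= S;
  partial_A_map_variation : forall (n : nat) x1 x2, A x1 -> A x2 ->
    dist x1 x2 <= INR n -> dist x1 x2 <= r ->
    l1_norm_le (fun y => zeta x1 y - zeta x2 y) (INR n * eps)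
}.

(* Two points of the union within distance [r] lie in the same member, so both
   rows come from the A-map of that member. *)
Lemma partial_A_map_of_disjoint_family (X : MetricSpace)
    (UU : (X -> Prop) -> Prop) (r eps S : R) :
  r_disjoint X r UU ->
  (forall U, UU U -> exists xi, A_map (subspace X U) eps S xi) ->
  exists zeta, partial_A_map X (fun x => exists U, UU U /\ U x) r eps S zeta.
Proof.
  intros Hdisj Hmaps.
  set (xi := fun U => epsilon (inhabits (fun _ _ : subspace X U => 0))
                              (A_map (subspace X U) eps S)).
  assert (Hxi : forall U, UU U -> A_map (subspace X U) eps S (xi U))
    by (intros U HU; apply epsilon_spec, Hmaps, HU).
  set (piece := fun x => epsilon (inhabits (fun _ : X => False))
                                 (fun U => UU U /\ U x)).
  assert (Hpiece : forall x, (exists U, UU U /\ U x) -> UU (piece x) /\ piece x x)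
    by (intros x Hx; exact (epsilon_spec _ (fun U => UU U /\ U x) Hx)).
  exists (fun x => lift (piece x) (fun a b => Rabs (xi (piece x) a b)) x).
  constructor.
  - intros x y. apply lift_nonneg. intros; apply Rabs_pos.
  - intros x Hx. destruct (Hpiece x Hx) as [HU Hx'].
    apply (l1_norm_is_lift _ _ (exist _ x Hx')), l1_norm_is_abs, Hxi, HU.
  - intros x y Hx Hne. destruct (Hpiece x Hx) as [HU _].
    destruct (lift_neq0 _ _ _ _ Hne) as [a [b [Ha [Hb Hab]]]].
    rewrite <- Ha, <- Hb. apply (Hxi _ HU). intros E. apply Hab. now rewrite E, Rabs_R0.
  - intros n x1 x2 Hx1 Hx2 Hn Hr.
    destruct (Hpiece x1 Hx1) as [HU1 Hx1']. destruct (Hpiece x2 Hx2) as [HU2 Hx2'].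
    assert (Hsame : piece x2 = piece x1).
    { apply NNPP. intros Hne. specialize (Hdisj _ _ HU2 HU1 Hne x2 x1 Hx2' Hx1').
      rewrite dist_sym in Hdisj. lra. }
    rewrite Hsame in Hx2' |- *.
    apply (l1_norm_le_lift_minus _ _ (exist _ x1 Hx1') (exist _ x2 Hx2')).
    apply l1_norm_le_abs_minus, Hxi; auto.
Qed.

Section Bump.
Context {X : MetricSpace} (A : X -> Prop) (L : R).

Definition bump_set (x : X) (s : R) : Prop :=
  s = 0 \/ exists y, A y /\ s = 1 - dist x y / L.

Definition bump (x : X) : R := epsilon (inhabits 0) (is_lub (bump_set x)).

Hypothesis L_pos : 0 < L.

Lemma bump_is_lub x : is_lub (bump_set x) (bump x).
Proof.
  unfold bump; apply epsilon_spec.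
  destruct (completeness (bump_set x)) as [m Hm]; [|exists 0; now left|now exists m].
  exists 1. intros s [->|[y [_ ->]]]; [lra|].
  pose proof (dist_nonneg X x y).
  enough (0 <= dist x y / L) by lra. apply Rle_mult_inv_pos; lra.
Qed.

Lemma bump_nonneg x : 0 <= bump x.
Proof. apply bump_is_lub. now left. Qed.

Lemma bump_in x : A x -> bump x = 1.
Proof.
  intros Hx. apply Rle_antisym.
  - apply bump_is_lub. intros s [->|[y [_ ->]]]; [lra|].
    pose proof (dist_nonneg X x y).
    enough (0 <= dist x y / L) by lra. apply Rle_mult_inv_pos; lra.
  - apply bump_is_lub. right. exists x. split; auto.
    rewrite dist_refl. unfold Rdiv. lra.
Qed.

Lemma bump_pos x : 0 < bump x -> exists y, A y /\ dist x y < L.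
Proof.
  intros Hpos. apply NNPP. intros Hfar.
  enough (bump x <= 0) by lra.
  apply bump_is_lub. intros s [->|[y [Hy ->]]]; [lra|].
  assert (L <= dist x y) by (apply Rnot_lt_le; intros Hlt; apply Hfar; eauto).
  enough (1 <= dist x y / L) by lra.
  apply Rmult_le_reg_r with L; [lra|]. unfold Rdiv.
  rewrite Rmult_assoc, Rinv_l; lra.
Qed.

Lemma bump_le_shift x1 x2 : bump x1 <= bump x2 + dist x1 x2 / L.
Proof.
  assert (0 <= dist x1 x2 / L) by (apply Rle_mult_inv_pos; [apply dist_nonneg|lra]).
  apply bump_is_lub. intros s [->|[y [Hy ->]]].
  - pose proof (bump_nonneg x2). lra.
  - enough (1 - dist x2 y / L <= bump x2).
    + pose proof (dist_tri X x2 x1 y). rewrite (dist_sym X x2 x1) in *.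
      enough (dist x2 y / L <= dist x1 x2 / L + dist x1 y / L) by lra.
      unfold Rdiv. rewrite <- Rmult_plus_distr_r.
      apply Rmult_le_compat_r; [left; now apply Rinv_0_lt_compat|lra].
    + apply bump_is_lub. right. eauto.
Qed.

Lemma bump_lipschitz x1 x2 : Rabs (bump x1 - bump x2) <= dist x1 x2 / L.
Proof.
  pose proof (bump_le_shift x1 x2). pose proof (bump_le_shift x2 x1).
  rewrite dist_sym in H0. apply Rabs_le. lra.
Qed.

End Bump.

(* Junk value [x] when no point of [A] is within [T] of [x]. *)
Definition near_point {X : MetricSpace} (A : X -> Prop) (T : R) (x : X) : X :=
  epsilon (inhabits x) (fun y => A y /\ dist x y <= T).

Lemma near_point_spec {X : MetricSpace} (A : X -> Prop) (T : R) (x : X) :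
  (exists y, A y /\ dist x y <= T) ->
  A (near_point A T x) /\ dist x (near_point A T x) <= T.
Proof. apply (epsilon_spec _ (fun y => A y /\ dist x y <= T)). Qed.

Lemma rsum_abs_normalize_minus_le k (a b : nat -> R) :
  (forall i, (i < k)%nat -> 0 <= b i) -> 1 <= rsum k a -> 1 <= rsum k b ->
  rsum k (fun i => Rabs (a i / rsum k a - b i / rsum k b)) <=
  2 * rsum k (fun i => Rabs (a i - b i)).
Proof.
  intros b_nonneg HA HB.
  set (SA := rsum k a) in *. set (SB := rsum k b) in *.
  set (Q := rsum k (fun i => Rabs (a i - b i))).
  assert (HQ : Rabs (SB - SA) <= Q).
  { unfold SA, SB, Q. rewrite <- rsum_minus.
    eapply Rle_trans; [apply Rabs_rsum_le|].
    apply rsum_le. intros. rewrite <- Rabs_Ropp. apply Req_le. f_equal. ring. }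
  assert (HinvA : 0 < / SA <= 1)
    by (split; [apply Rinv_0_lt_compat|rewrite <- Rinv_1; apply Rinv_le_contravar]; lra).
  apply Rle_trans with
    (rsum k (fun i => / SA * Rabs (a i - b i) + Rabs (SB - SA) / (SA * SB) * b i)).
  - apply rsum_le. intros i Hi. pose proof (b_nonneg i Hi).
    replace (a i / SA - b i / SB) with (/ SA * (a i - b i) + (SB - SA) / (SA * SB) * b i)
      by (field; lra).
    eapply Rle_trans; [apply Rabs_triang|].
    rewrite !Rabs_mult, (Rabs_pos_eq (/ SA)), (Rabs_pos_eq (b i)) by lra.
    unfold Rdiv. rewrite Rabs_mult, (Rabs_pos_eq (/ (SA * SB))); [lra|].
    apply Rlt_le, Rinv_0_lt_compat. nra.
  - rewrite rsum_plus, !rsum_scal. fold SB Q.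
    replace (Rabs (SB - SA) / (SA * SB) * SB) with (/ SA * Rabs (SB - SA)) by (field; lra).
    assert (0 <= Q) by (apply rsum_nonneg; intros; apply Rabs_pos).
    pose proof (Rabs_pos (SB - SA)). nra.
Qed.

Lemma rsum_inv_pow2 k : rsum k (fun i => / 2 ^ S i) = 1 - / 2 ^ k.
Proof.
  induction k as [|k IH]; [simpl; lra|].
  change (rsum (S k) ?f) with (rsum k f + f k).
  rewrite IH. simpl pow. field. apply pow_nonzero. lra.
Qed.

Lemma rsum_inv_geometric_le (N : nat) k : (0 < N)%nat ->
  rsum k (fun i => / INR (N * 2 ^ S i)) <= / INR N.
Proof.
  intros HN.
  rewrite (rsum_ext k _ (fun i => / INR N * / 2 ^ S i)).
  - rewrite rsum_scal, rsum_inv_pow2.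
    assert (0 < / INR N) by (apply Rinv_0_lt_compat, lt_0_INR; auto).
    assert (0 < / 2 ^ k) by (apply Rinv_0_lt_compat, pow_lt; lra).
    nra.
  - intros i _. rewrite mult_INR, pow_INR, Rinv_mult. reflexivity.
Qed.

(* [scale N i] doubles with [i] so that [sum_i 1 / scale N i <= 1 / N] however
   many levels the decomposition has. *)
Definition scale (N i : nat) : nat := N * 2 ^ S i.
Definition reach (N i : nat) : nat := scale N i + N.
Definition separation (N i : nat) : R := INR (2 * reach N i + N).
Definition tolerance (eps : R) (N i : nat) : R := eps / (2 * (2 * INR (reach N i) + 1)).

Lemma tolerance_pos eps N i : 0 < eps -> 0 < tolerance eps N i.
Proof.
  intros Heps. unfold tolerance. pose proof (pos_INR (reach N i)).
  apply Rdiv_lt_0_compat; lra.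
Qed.

Lemma tolerance_mul_le eps N i (m : nat) : 0 < eps -> (1 <= m)%nat ->
  INR (2 * reach N i + m) * tolerance eps N i <= INR m * eps / 2.
Proof.
  intros Heps Hm. apply le_INR in Hm. unfold tolerance.
  rewrite plus_INR, mult_INR. simpl (INR 1) in Hm. simpl (INR 2).
  set (t := INR (reach N i)). assert (0 <= t) by apply pos_INR.
  replace (INR m * eps / 2) with (INR m * (2 * t + 1) * (eps / (2 * (2 * t + 1))))
    by (field; lra).
  apply Rmult_le_compat_r; [apply Rlt_le, Rdiv_lt_0_compat; lra|nra].
Qed.

Section Assembly.
Variables (X : MetricSpace) (eps : R) (N k : nat) (A : nat -> X -> Prop)
  (zeta : nat -> X -> X -> R) (rad : nat -> R).
Hypothesis eps_pos : 0 < eps.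
Hypothesis N_pos : (0 < N)%nat.
Hypothesis N_large : / INR N < eps / 4.
Hypothesis A_cover : forall x, exists i, (i < k)%nat /\ A i x.
Hypothesis zeta_partial : forall i, (i < k)%nat ->
  partial_A_map X (A i) (separation N i) (tolerance eps N i) (rad i) (zeta i).
Hypothesis rad_nonneg : forall i, (i < k)%nat -> 0 <= rad i.

Let L i := INR (scale N i).
Let T i := INR (reach N i).

Definition weight (i : nat) (x : X) : R :=
  bump (A i) (L i) x / rsum k (fun j => bump (A j) (L j) x).

Definition glued (x : X) : X -> R :=
  fun y => rsum k (fun i => weight i x * zeta i (near_point (A i) (T i) x) y).

Definition glued_radius : R := 1 + rsum k (fun i => T i + rad i).

Lemma scale_pos i : 0 < L i.
Proof.
  apply lt_0_INR. unfold scale. pose proof (Nat.pow_nonzero 2 (S i)). lia.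
Qed.

Lemma N_eps_ge4 : 4 <= INR N * eps.
Proof.
  assert (0 < INR N) by (apply lt_0_INR; auto).
  apply Rmult_lt_compat_l with (r := INR N) in N_large; auto.
  rewrite Rinv_r in N_large; lra.
Qed.

Lemma bump_total_ge1 x : 1 <= rsum k (fun j => bump (A j) (L j) x).
Proof.
  destruct (A_cover x) as [j [Hj Hx]].
  rewrite <- (bump_in (A j) (L j) (scale_pos j) x Hx).
  apply (rsum_term_le k (fun j => bump (A j) (L j) x)); auto.
  intros; apply bump_nonneg, scale_pos.
Qed.

Lemma weight_nonneg i x : 0 <= weight i x.
Proof.
  pose proof (bump_total_ge1 x). unfold weight.
  apply Rle_mult_inv_pos; [apply bump_nonneg, scale_pos|lra].
Qed.

Lemma weight_sum x : rsum k (fun i => weight i x) = 1.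
Proof.
  pose proof (bump_total_ge1 x). unfold weight, Rdiv.
  rewrite (rsum_ext k _ (fun i => / rsum k (fun j => bump (A j) (L j) x) *
                                   bump (A i) (L i) x)) by (intros; ring).
  rewrite rsum_scal. field. lra.
Qed.

Lemma weight_neq0 i x : weight i x <> 0 -> exists y, A i y /\ dist x y < L i.
Proof.
  intros Hw. apply (bump_pos (A i) (L i) (scale_pos i)).
  destruct (bump_nonneg (A i) (L i) (scale_pos i) x) as [|E]; auto.
  exfalso. apply Hw. unfold weight. rewrite <- E. unfold Rdiv. ring.
Qed.

Lemma near_point_of_weight i x1 x2 : weight i x2 <> 0 -> dist x1 x2 <= INR N ->
  A i (near_point (A i) (T i) x1) /\ dist x1 (near_point (A i) (T i) x1) <= T i.
Proof.
  intros Hw Hd. apply near_point_spec.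
  destruct (weight_neq0 i x2 Hw) as [y [Hy Hxy]]. exists y. split; auto.
  pose proof (dist_tri X x1 x2 y).
  unfold T, reach. rewrite plus_INR. fold (L i). lra.
Qed.

Lemma weight_variation x1 x2 :
  rsum k (fun i => Rabs (weight i x1 - weight i x2)) <= dist x1 x2 * eps / 2.
Proof.
  eapply Rle_trans.
  { apply rsum_abs_normalize_minus_le; [intros; apply bump_nonneg, scale_pos|
                                        apply bump_total_ge1|apply bump_total_ge1]. }
  eapply Rle_trans.
  { apply Rmult_le_compat_l; [lra|].
    apply (rsum_le k _ (fun i => dist x1 x2 * / L i)).
    intros i _. apply bump_lipschitz, scale_pos. }
  rewrite rsum_scal.
  pose proof (rsum_inv_geometric_le N k N_pos).
  pose proof (dist_nonneg X x1 x2). unfold L, scale. nra.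
Qed.

Lemma glued_unit x : l1_norm_is (glued x) 1.
Proof.
  apply l1_norm_is_convex_comb.
  - intros; apply weight_nonneg.
  - apply weight_sum.
  - intros i y Hi. apply (partial_A_map_nonneg _ _ _ _ _ _ (zeta_partial i Hi)).
  - intros i Hi Hw. apply (partial_A_map_unit _ _ _ _ _ _ (zeta_partial i Hi)).
    apply (near_point_of_weight i x x); [lra|]. rewrite dist_refl. apply pos_INR.
Qed.

Lemma glued_support x y : glued x y <> 0 -> dist x y <= glued_radius.
Proof.
  intros Hxy. destruct (rsum_neq0 _ _ Hxy) as [i [Hi Hne]].
  assert (Hw : weight i x <> 0) by (intros E; apply Hne; rewrite E; ring).
  assert (Hz : zeta i (near_point (A i) (T i) x) y <> 0)
    by (intros E; apply Hne; rewrite E; ring).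
  destruct (near_point_of_weight i x x Hw) as [Hp Hxp];
    [rewrite dist_refl; apply pos_INR|].
  pose proof (partial_A_map_support _ _ _ _ _ _ (zeta_partial i Hi) _ _ Hp Hz).
  pose proof (dist_tri X x (near_point (A i) (T i) x) y).
  assert (T i + rad i <= rsum k (fun j => T j + rad j)).
  { apply (rsum_term_le k (fun j => T j + rad j)); auto.
    intros j Hj. pose proof (rad_nonneg j Hj). unfold T. pose proof (pos_INR (reach N j)). lra. }
  unfold glued_radius. lra.
Qed.

Lemma glued_variation_far (m : nat) x1 x2 : (N < m)%nat ->
  l1_norm_le (fun y => glued x1 y - glued x2 y) (INR m * eps).
Proof.
  intros Hm. apply l1_norm_le_weaken with (1 + 1).
  - apply lt_INR in Hm. pose proof N_eps_ge4. nra.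
  - apply l1_norm_le_minus; apply l1_norm_is_le, glued_unit.
Qed.

Lemma glued_variation_near (m : nat) x1 x2 : (1 <= m <= N)%nat ->
  dist x1 x2 <= INR m ->
  l1_norm_le (fun y => glued x1 y - glued x2 y) (INR m * eps).
Proof.
  intros Hm Hd. assert (HmN : dist x1 x2 <= INR N) by (pose proof (le_INR m N ltac:(lia)); lra).
  set (p := fun i x => near_point (A i) (T i) x).
  apply l1_norm_le_weaken with
    (rsum k (fun i => Rabs (weight i x1 - weight i x2)) + INR m * eps / 2).
  { pose proof (weight_variation x1 x2). nra. }
  apply l1_norm_le_comb_minus.
  - intros; apply weight_nonneg.
  - apply weight_sum.
  - intros i Hi Hw. apply l1_norm_is_le, (partial_A_map_unit _ _ _ _ _ _ (zeta_partial i Hi)).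
    destruct (Req_dec (weight i x1) 0) as [E|Hw1].
    + apply (near_point_of_weight i x1 x2); auto. lra.
    + apply (near_point_of_weight i x1 x1); auto. rewrite dist_refl. apply pos_INR.
  - intros i Hi Hw.
    destruct (near_point_of_weight i x1 x2 Hw HmN) as [Hp1 Hd1].
    destruct (near_point_of_weight i x2 x2 Hw) as [Hp2 Hd2];
      [rewrite dist_refl; apply pos_INR|].
    assert (Hp : dist (p i x1) (p i x2) <= INR (2 * reach N i + m)).
    { pose proof (dist_tri X (p i x1) x1 (p i x2)). pose proof (dist_tri X x1 x2 (p i x2)).
      rewrite (dist_sym X (p i x1) x1) in *. rewrite plus_INR, mult_INR.
      simpl (INR 2). fold (T i). unfold p in *. lra. }
    eapply l1_norm_le_weaken; [apply tolerance_mul_le; auto; lia|].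
    apply (partial_A_map_variation _ _ _ _ _ _ (zeta_partial i Hi)); auto.
    unfold separation. eapply Rle_trans; [exact Hp|]. apply le_INR. lia.
Qed.

Lemma glued_variation : has_variation X glued eps.
Proof.
  intros m x1 x2 Hd. destruct (Nat.lt_ge_cases N m) as [Hfar|Hnear].
  - now apply glued_variation_far.
  - destruct m as [|m].
    + assert (x1 = x2) by (apply (dist_eq X); pose proof (dist_nonneg X x1 x2); simpl in Hd; lra).
      subst x2. rewrite Rmult_0_l. apply l1_norm_le_0. intros; ring.
    + apply glued_variation_near; auto. lia.
Qed.

Lemma A_map_glued : A_map X eps glued_radius glued.
Proof. split; [|split]; [apply glued_unit|apply glued_variation|apply glued_support]. Qed.

End Assembly.

Theorem theorem1p9 (YY : (nat -> R) -> mfamily) (XX : mfamily) :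
  (forall Rs : nat -> R, uniform_property_A (YY Rs)) ->
  (forall Rs : nat -> R, uniformly_decomposable Rs XX (YY Rs)) ->
  uniform_property_A XX.
Proof.
  intros HA Hdec eps Heps.
  destruct (archimed_cor1 (eps / 4)) as [N [N_large N_pos]]; [lra|].
  destruct (Hdec (separation N)) as [k Hk].
  destruct (choice (fun i S => S > 0 /\ forall Y, YY (separation N) Y ->
                      exists xi, A_map Y (tolerance eps N i) S xi))
    as [rad Hrad].
  { intros i. apply HA, tolerance_pos, Heps. }
  exists (glued_radius N k rad). split.
  { enough (0 <= rsum k (fun i => INR (reach N i) + rad i)) by (unfold glued_radius; lra).
    apply rsum_nonneg. intros i _. pose proof (pos_INR (reach N i)).
    pose proof (proj1 (Hrad i)). lra. }
  intros X HX. destruct (Hk X HX) as [UU [HUU [Hdisj Hcover]]].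
  destruct (choice (fun i zeta => (i < k)%nat ->
              partial_A_map X (fun x => exists U, UU i U /\ U x)
                (separation N i) (tolerance eps N i) (rad i) zeta)) as [zeta Hzeta].
  { intros i. destruct (Nat.lt_ge_cases i k) as [Hi|Hi]; [|exists (fun _ _ => 0); lia].
    destruct (partial_A_map_of_disjoint_family X (UU i) (separation N i)
                (tolerance eps N i) (rad i) (Hdisj i Hi)) as [z Hz]; eauto.
    intros U HU. apply (proj2 (Hrad i)), (HUU i Hi U HU). }
  exists (glued X N k (fun i x => exists U, UU i U /\ U x) zeta).
  apply A_map_glued; auto.
  - intros x. destruct (Hcover x) as [i [U [Hi [HU Hx]]]]. eauto.
  - intros i _. apply Rlt_le, Hrad.
Qed.
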